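(* Let $(\mathbf{P}_t)_{t\ge0}$ be a continuous-time Markov process on a countable state space $\mathcal{S}$ with stable conservative $Q$-matrix $Q=(q_{ij})$ satisfying $\sup_{i\in\mathcal{S}}q_i<\infty$. Then for every $t\ge0$, $$\inf_{i\ne j}\|\mathbf{p}^i(t)-\mathbf{p}^j(t)\|_{\mathrm{TV}}\ge\exp(-t\|Q\|)>0,$$ where $\|Q\|=\sup_i\sum_j|q_{ij}|=\sup_i2q_i$. In particular the process is initial-state identifiable.
   Context: $\mathbf{P}_t=(p_{ij}(t))$ is the transition matrix, $\mathbf{p}^i(t)$ its $i$-th row, $q_{ij}=p'_{ij}(0)\ge0$ for $i\ne j$, $q_i=-q_{ii}=\sum_{j\ne i}q_{ij}$. $\|\mu_1-\mu_2\|_{\mathrm{TV}}=\frac12\sum_\sigma|\mu_1(\sigma)-\mu_2(\sigma)|$. Initial-state identifiability: for every $t\in[0,\infty)$ all rows of $\mathbf{P}_t$ are distinct. *)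

From Stdlib Require Import Reals Lra.
Open Scope R_scope.

(* A countable state space is modelled as a decidable subset S of nat:
   the states are the n with S n = true. *)

Definition ssum (S : nat -> bool) (f : nat -> R) (l : R) : Prop :=
  infinite_sum (fun n => if S n then f n else 0) l.

Definition kron (i j : nat) : R := if Nat.eqb i j then 1 else 0.

Definition transition_function (S : nat -> bool) (P : R -> nat -> nat -> R) : Prop :=
  (forall t i j, 0 <= t -> S i = true -> S j = true -> 0 <= P t i j) /\
  (forall t i, 0 <= t -> S i = true -> ssum S (P t i) 1) /\
  (forall i j, S i = true -> S j = true -> P 0 i j = kron i j) /\
  (forall s t i j, 0 <= s -> 0 <= t -> S i = true -> S j = true ->
     ssum S (fun k => P s i k * P t k j) (P (s + t) i j)).

Definition has_Q_matrix (S : nat -> bool) (P : R -> nat -> nat -> R)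
  (Q : nat -> nat -> R) : Prop :=
  forall i j, S i = true -> S j = true ->
    limit1_in (fun h => (P h i j - kron i j) / h) (fun h => 0 < h) (Q i j) 0.

Definition qdiag (Q : nat -> nat -> R) (i : nat) : R := - Q i i.

(* conservative: q_i = sum_{j <> i} q_ij (stability is automatic: q_i is real) *)
Definition conservative (S : nat -> bool) (Q : nat -> nat -> R) : Prop :=
  forall i, S i = true ->
    ssum S (fun j => if Nat.eqb j i then 0 else Q i j) (qdiag Q i).

(* ||mu1 - mu2||_TV = (1/2) sum |mu1 - mu2| ; rows i, j of P_t *)
Definition tv_rows (S : nat -> bool) (P : R -> nat -> nat -> R)
  (t : R) (i j : nat) (d : R) : Prop :=
  ssum S (fun k => Rabs (P t i k - P t j k)) (2 * d).

Definition is_normQ (S : nat -> bool) (Q : nat -> nat -> R) (N : R) : Prop :=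
  is_lub (fun x => exists i, S i = true /\ ssum S (fun j => Rabs (Q i j)) x) N.

Definition initial_state_identifiable (S : nat -> bool) (P : R -> nat -> nat -> R) : Prop :=
  forall t i j, 0 <= t -> S i = true -> S j = true -> i <> j ->
    exists k, S k = true /\ P t i k <> P t j k.

From Stdlib Require Import Reals Lra Lia ClassicalEpsilon Classical.
Open Scope R_scope.

(* Let F(t) = sum_k |p_ik(t) - p_jk(t)|.  By Chapman-Kolmogorov the rows of P_(s+h) are the
   rows of P_s multiplied by P_h.  The diagonal of P_h satisfies p_kk(h) >= exp(-||Q|| h / 2),
   so at most ||Q|| h / 2 of the mass of each row leaves the diagonal, and multiplying a signed
   vector by P_h shrinks its l1 norm by a factor at worst 1 - ||Q|| h: F(s + h) >= (1 - ||Q|| h) F(s).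
   Iterating over n steps of length t/n and letting n -> oo gives F(t) >= F(0) exp(-||Q|| t)
   = 2 exp(-||Q|| t).  The same iteration, applied to p_kk(s + h) >= p_kk(s) p_kk(h) together with
   p'_kk(0) = -q_k >= -||Q|| / 2, gives the diagonal bound. *)

Lemma pow_one_sub_ge x n : 0 <= x <= 1 -> 1 - INR n * x <= (1 - x) ^ n.
Proof.
  intros Hx; induction n as [|n IH]; simpl pow.
  - simpl; lra.
  - rewrite S_INR. pose proof (pos_INR n). pose proof (pow_le (1 - x) n ltac:(lra)). nra.
Qed.

Lemma exp_neg_le_1 x : 0 <= x -> exp (- x) <= 1.
Proof.
  rewrite <- exp_0. intros [Hx | <-].
  - left; apply exp_increasing; lra.
  - rewrite Ropp_0; lra.
Qed.

(* With [x = a/n]: [(1 - x) e^x >= 1 - x^2], and Bernoulli bounds [(1 - x^2)^n]. *)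
Lemma exp_neg_sub_le_pow n a : 0 < INR n -> 0 <= a <= INR n ->
  exp (- a) - a ^ 2 / INR n <= (1 - a / INR n) ^ n.
Proof.
  intros Hn Ha. set (x := a / INR n).
  assert (Hx : 0 <= x <= 1).
  { unfold x, Rdiv; split; [apply Rmult_le_pos; [lra | left; apply Rinv_0_lt_compat; lra]|].
    apply (Rmult_le_reg_r (INR n)); [lra|]. rewrite Rmult_assoc, Rinv_l; lra. }
  assert (Hexp : exp a = exp x ^ n).
  { rewrite <- Rpower_pow by apply exp_pos. unfold Rpower. rewrite ln_exp.
    unfold x. f_equal. field. lra. }
  assert (Hsq : a ^ 2 / INR n = INR n * (x * x)) by (unfold x; field; lra).
  assert (Hbern : 1 - INR n * (x * x) <= (1 - x * x) ^ n) by (apply pow_one_sub_ge; nra).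
  assert (Hpow : (1 - x * x) ^ n <= (1 - x) ^ n * exp a).
  { rewrite Hexp, <- Rpow_mult_distr. apply pow_incr. split; [nra|].
    pose proof (exp_ineq1_le x). nra. }
  assert (Hinv : exp (- a) * exp a = 1) by (rewrite <- exp_plus, Rplus_opp_l; apply exp_0).
  pose proof (exp_neg_le_1 a (proj1 Ha)).
  rewrite Hsq. fold x.
  assert (Hmul : exp (- a) * (1 - INR n * (x * x)) <= (1 - x) ^ n).
  { replace ((1 - x) ^ n) with (exp (- a) * ((1 - x) ^ n * exp a))
      by (rewrite <- Rmult_assoc, (Rmult_comm (exp (- a))), Rmult_assoc, Hinv; ring).
    apply Rmult_le_compat_l; [left; apply exp_pos | lra]. }
  assert (0 <= INR n * (x * x)) by (apply Rmult_le_pos; nra).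
  pose proof (exp_pos (- a)). nra.
Qed.

Section SupermultiplicativeBound.
Variables (F G : R -> R) (F0 c : R).
Hypothesis c_nonneg : 0 <= c.
Hypothesis F0_nonneg : 0 <= F0.
Hypothesis F0_le : F0 <= F 0.
Hypothesis F_supermult : forall s h, 0 <= s -> 0 < h -> F s * G h <= F (s + h).
Hypothesis G_near_0 : forall eps, 0 < eps -> exists delta, 0 < delta /\
  forall h, 0 < h < delta -> 1 - (c + eps) * h <= G h.

Lemma supermult_iter h g m : 0 < h -> 0 <= g <= G h -> F0 * g ^ m <= F (INR m * h).
Proof.
  intros Hh Hg; induction m as [|m IH].
  - simpl; rewrite Rmult_0_l; lra.
  - rewrite S_INR, Rmult_plus_distr_r, Rmult_1_l; simpl pow.
    assert (Hmh : 0 <= INR m * h) by (apply Rmult_le_pos; [apply pos_INR | lra]).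
    pose proof (F_supermult _ _ Hmh Hh).
    assert (0 <= F0 * g ^ m) by (apply Rmult_le_pos; [| apply pow_le]; lra).
    nra.
Qed.

(* Iterate over [n] steps of length [t/n] and compare [(1 - a/n)^n] with [exp (-a)]. *)
Lemma supermult_ge_exp_eps t eps : 0 < t -> 0 < eps ->
  F0 * exp (- ((c + eps) * t)) <= F t.
Proof.
  intros Ht Heps. destruct (G_near_0 eps Heps) as [delta [Hdelta HG]].
  set (a := (c + eps) * t).
  assert (Ha : 0 < a) by (unfold a; nra).
  apply Rle_plus_epsilon; intros eta Heta.
  assert (Hbounds : 0 <= t / delta /\ 0 <= F0 * a ^ 2 / eta).
  { unfold Rdiv; split; repeat apply Rmult_le_pos; try apply pow_le;
      try (left; apply Rinv_0_lt_compat); lra. }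
  destruct (INR_archimed 1 (1 + a + t / delta + F0 * a ^ 2 / eta) Rlt_0_1) as [n Hn].
  rewrite Rmult_1_r in Hn.
  set (h := t / INR n).
  assert (Hh : 0 < h < delta).
  { unfold h; split; [apply Rdiv_lt_0_compat; lra|].
    apply (Rmult_lt_reg_r (INR n)); [lra|].
    replace (t / INR n * INR n) with t by (field; lra).
    apply (Rmult_lt_reg_r (/ delta)); [apply Rinv_0_lt_compat; lra|].
    replace (delta * INR n * / delta) with (INR n) by (field; lra).
    lra. }
  assert (Hg : 1 - (c + eps) * h = 1 - a / INR n) by (unfold h, a; field; lra).
  assert (Hg0 : 0 <= 1 - a / INR n).
  { cut (a / INR n <= 1); [lra|].
    apply (Rmult_le_reg_r (INR n)); [lra|].
    replace (a / INR n * INR n) with a by (field; lra). lra. }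
  pose proof (HG h Hh) as HGh. rewrite Hg in HGh.
  pose proof (supermult_iter h _ n (proj1 Hh) (conj Hg0 HGh)) as Hiter.
  replace (INR n * h) with t in Hiter by (unfold h; field; lra).
  pose proof (exp_neg_sub_le_pow n a ltac:(lra) ltac:(lra)) as Hpow.
  assert (Herr : F0 * (a ^ 2 / INR n) <= eta).
  { apply (Rmult_le_reg_r (INR n)); [lra|].
    replace (F0 * (a ^ 2 / INR n) * INR n) with (F0 * a ^ 2) by (field; lra).
    apply (Rmult_le_reg_r (/ eta)); [apply Rinv_0_lt_compat; lra|].
    replace (eta * INR n * / eta) with (INR n) by (field; lra).
    unfold Rdiv in Hn. lra. }
  assert (F0 * (exp (- a) - a ^ 2 / INR n) <= F0 * (1 - a / INR n) ^ n)
    by (apply Rmult_le_compat_l; lra).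
  unfold a in *. lra.
Qed.

Lemma supermult_ge_exp t : 0 <= t -> F0 * exp (- c * t) <= F t.
Proof.
  intros [Ht | <-].
  2: { rewrite Rmult_0_r, exp_0; lra. }
  assert (Hdecay : exp (- c * t) <= 1)
    by (rewrite Ropp_mult_distr_l_reverse; apply exp_neg_le_1; nra).
  apply Rle_plus_epsilon; intros eta Heta.
  set (eps := eta / (F0 * t + 1)).
  assert (Heps : 0 < eps) by (unfold eps; apply Rdiv_lt_0_compat; nra).
  pose proof (supermult_ge_exp_eps t eps Ht Heps) as Hlow.
  replace (- ((c + eps) * t)) with (- c * t + - (eps * t)) in Hlow by ring.
  rewrite exp_plus in Hlow.
  pose proof (exp_ineq1_le (- (eps * t))).
  pose proof (exp_pos (- c * t)).
  assert (Hcost : F0 * t * eps <= eta).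
  { unfold eps. apply (Rmult_le_reg_r (F0 * t + 1)); [nra|].
    replace (F0 * t * (eta / (F0 * t + 1)) * (F0 * t + 1)) with (F0 * t * eta) by (field; nra).
    nra. }
  assert (F0 * exp (- c * t) * (1 - eps * t) <= F0 * exp (- c * t) * exp (- (eps * t)))
    by (apply Rmult_le_compat_l; nra).
  nra.
Qed.

End SupermultiplicativeBound.

Definition series_value (u : nat -> R) : R :=
  epsilon (inhabits 0) (fun l => infinite_sum u l).

Lemma series_value_spec u : (exists l, infinite_sum u l) -> infinite_sum u (series_value u).
Proof. apply epsilon_spec. Qed.

Lemma Un_cv_const c : Un_cv (fun _ => c) c.
Proof.
  intros eps Heps. exists 0%nat. intros n _.
  unfold Rdist. rewrite Rminus_diag, Rabs_R0. exact Heps.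
Qed.

Section StateSums.
Variable S : nat -> bool.

Definition ssum_partial (f : nat -> R) (n : nat) : R :=
  sum_f_R0 (fun k => if S k then f k else 0) n.

Lemma ssum_ext f g l : (forall n, S n = true -> f n = g n) -> ssum S f l -> ssum S g l.
Proof.
  intros Hfg. apply Un_cv_ext. intros n. apply sum_eq. intros k _.
  destruct (S k) eqn:Sk; auto.
Qed.

Lemma ssum_plus f g a b : ssum S f a -> ssum S g b -> ssum S (fun n => f n + g n) (a + b).
Proof.
  intros Hf Hg. apply (Un_cv_ext (fun n => ssum_partial f n + ssum_partial g n)).
  - intros n. unfold ssum_partial. rewrite <- plus_sum. apply sum_eq. intros k _.
    destruct (S k); ring.
  - now apply CV_plus.
Qed.

Lemma ssum_minus f g a b : ssum S f a -> ssum S g b -> ssum S (fun n => f n - g n) (a - b).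
Proof.
  intros Hf Hg. apply (Un_cv_ext (fun n => ssum_partial f n - ssum_partial g n)).
  - intros n. unfold ssum_partial. rewrite <- minus_sum. apply sum_eq. intros k _.
    destruct (S k); ring.
  - now apply CV_minus.
Qed.

Lemma ssum_scal c f l : ssum S f l -> ssum S (fun n => c * f n) (c * l).
Proof.
  intros Hf. apply (Un_cv_ext (fun n => c * ssum_partial f n)).
  - intros n. unfold ssum_partial. rewrite scal_sum. apply sum_eq. intros k _.
    destruct (S k); ring.
  - apply (CV_mult (fun _ => c)); [apply Un_cv_const | exact Hf].
Qed.

Lemma ssum_const0 : ssum S (fun _ => 0) 0.
Proof.
  apply (Un_cv_ext (fun _ => 0)); [| apply Un_cv_const].
  intros n. induction n as [|n IH]; simpl; [| rewrite <- IH]; destruct (S _); ring.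
Qed.

Lemma ssum_single k a : S k = true -> ssum S (fun m => if Nat.eqb m k then a else 0) a.
Proof.
  intros Sk eps Heps. exists k. intros n Hn.
  replace (sum_f_R0 _ n) with a; [unfold Rdist; rewrite Rminus_diag, Rabs_R0; lra|].
  induction Hn as [|n Hkn IH]; cbn [sum_f_R0].
  - destruct k as [|k]; simpl; [now rewrite Sk|].
    rewrite Nat.eqb_refl, Sk.
    replace (sum_f_R0 _ k) with 0; [ring|].
    symmetry; apply sum_eq_R0. intros m Hm.
    rewrite (proj2 (Nat.eqb_neq m (Datatypes.S k))) by lia. now destruct (S m).
  - rewrite <- IH, (proj2 (Nat.eqb_neq (Datatypes.S n) k)) by lia.
    destruct (S (Datatypes.S n)); ring.
Qed.

Lemma ssum_le f g a b : (forall n, S n = true -> f n <= g n) ->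
  ssum S f a -> ssum S g b -> a <= b.
Proof.
  intros Hfg Hf Hg. eapply Rle_cv_lim; [| exact Hf | exact Hg].
  intros n. apply sum_Rle. intros k _. destruct (S k) eqn:Sk; [apply Hfg, Sk | lra].
Qed.

Lemma ssum_partial_le f l n : (forall k, S k = true -> 0 <= f k) ->
  ssum S f l -> ssum_partial f n <= l.
Proof.
  intros Hf Hl. apply sum_incr; [exact Hl|]. intros k.
  destruct (S k) eqn:Sk; [apply Hf, Sk | lra].
Qed.

Lemma ssum_term_le f l k : (forall n, S n = true -> 0 <= f n) ->
  ssum S f l -> S k = true -> f k <= l.
Proof.
  intros Hf Hl Sk. apply Rle_trans with (2 := ssum_partial_le f l k Hf Hl).
  unfold ssum_partial. destruct k as [|k]; cbn [sum_f_R0]; rewrite Sk; [lra|].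
  enough (0 <= sum_f_R0 (fun m => if S m then f m else 0) k) by lra.
  apply cond_pos_sum. intros m. destruct (S m) eqn:Sm; [apply Hf, Sm | lra].
Qed.

Lemma ssum_nonneg f l : (forall n, S n = true -> 0 <= f n) -> ssum S f l -> 0 <= l.
Proof.
  intros Hf Hl. apply Rle_trans with (2 := ssum_partial_le f l 0 Hf Hl).
  unfold ssum_partial; simpl. destruct (S 0) eqn:S0; [apply Hf, S0 | lra].
Qed.

Lemma ssum_le_of_partial_le f l b : (forall n, ssum_partial f n <= b) -> ssum S f l -> l <= b.
Proof. intros Hb Hl. eapply Rle_cv_lim; [exact Hb | exact Hl | apply Un_cv_const]. Qed.

Lemma ssum_delete f l k : S k = true -> ssum S f l ->
  ssum S (fun m => if Nat.eqb m k then 0 else f m) (l - f k).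
Proof.
  intros Sk Hl. eapply ssum_ext; [| exact (ssum_minus _ _ _ _ Hl (ssum_single k (f k) Sk))].
  intros m _; cbv beta. destruct (Nat.eqb_spec m k); [subst; ring | ring].
Qed.

Lemma ssum_undelete f l k : S k = true ->
  ssum S (fun m => if Nat.eqb m k then 0 else f m) l -> ssum S f (l + f k).
Proof.
  intros Sk Hl. eapply ssum_ext; [| exact (ssum_plus _ _ _ _ Hl (ssum_single k (f k) Sk))].
  intros m _; cbv beta. destruct (Nat.eqb_spec m k); [subst; ring | ring].
Qed.

Lemma ssum_abs_le f a b : ssum S f a -> ssum S (fun n => Rabs (f n)) b -> Rabs a <= b.
Proof.
  intros Ha Hb. apply Rabs_le. split.
  - replace (- b) with (-1 * b) by ring.
    eapply ssum_le; [| exact (ssum_scal (-1) _ _ Hb) | exact Ha].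
    intros n _. pose proof (Rabs_pos (f n)). pose proof (Rle_abs (- f n)).
    rewrite Rabs_Ropp in *. lra.
  - apply (ssum_le _ _ _ _ (fun n _ => Rle_abs (f n)) Ha Hb).
Qed.

Lemma ssum_exists_le f g b : (forall n, S n = true -> 0 <= f n <= g n) ->
  ssum S g b -> exists a, ssum S f a.
Proof.
  intros Hfg Hg.
  destruct (Rseries_CV_comp (fun n => if S n then f n else 0) (fun n => if S n then g n else 0))
    as [a Ha]; [| exists b; exact Hg | exists a; exact Ha].
  intros n. destruct (S n) eqn:Sn; [apply Hfg, Sn | lra].
Qed.

Lemma ssum_partial_sum (f : nat -> nat -> R) (l : nat -> R) n :
  (forall k, S k = true -> ssum S (f k) (l k)) ->
  ssum S (fun m => ssum_partial (fun k => f k m) n) (ssum_partial l n).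
Proof.
  intros Hf. induction n as [|n IH]; unfold ssum_partial in *; cbn [sum_f_R0].
  - destruct (S 0) eqn:S0; [apply Hf, S0 | apply ssum_const0].
  - apply ssum_plus; [exact IH|].
    destruct (S (Datatypes.S n)) eqn:Sn; [apply Hf, Sn | apply ssum_const0].
Qed.
End StateSums.

Section NearIdentityStochastic.
Variables (S : nat -> bool) (A : nat -> nat -> R) (c : R) (nu mu : nat -> R) (L L' : R).
Hypothesis A_nonneg : forall m k, S m = true -> S k = true -> 0 <= A m k.
Hypothesis A_row_sum : forall m, S m = true -> ssum S (A m) 1.
Hypothesis A_diag_ge : forall m, S m = true -> 1 - c <= A m m.
Hypothesis nu_abs_sum : ssum S (fun m => Rabs (nu m)) L.
Hypothesis mu_eq : forall k, S k = true -> ssum S (fun m => nu m * A m k) (mu k).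
Hypothesis mu_abs_sum : ssum S (fun k => Rabs (mu k)) L'.

Definition offdiag_mass (k m : nat) : R := if Nat.eqb m k then 0 else Rabs (nu m) * A m k.

Definition offdiag_total (k : nat) : R :=
  series_value (fun m => if S m then offdiag_mass k m else 0).

Lemma offdiag_total_spec k : S k = true -> ssum S (offdiag_mass k) (offdiag_total k).
Proof.
  intros Sk. apply series_value_spec.
  apply (ssum_exists_le S (offdiag_mass k) (fun m => Rabs (nu m)) L); [| exact nu_abs_sum].
  intros m Sm. unfold offdiag_mass. pose proof (Rabs_pos (nu m)).
  destruct (Nat.eqb m k); [lra|].
  assert (A m k <= 1).
  { apply (ssum_term_le S (A m)); auto. }
  pose proof (A_nonneg m k Sm Sk). nra.
Qed.

Lemma mu_near_diag k : S k = true -> Rabs (mu k - nu k * A k k) <= offdiag_total k.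
Proof.
  intros Sk. apply (ssum_abs_le S (fun m => if Nat.eqb m k then 0 else nu m * A m k)).
  - exact (ssum_delete S _ _ k Sk (mu_eq k Sk)).
  - eapply ssum_ext; [| exact (offdiag_total_spec k Sk)].
    intros m Sm. unfold offdiag_mass. destruct (Nat.eqb m k); [now rewrite Rabs_R0|].
    rewrite Rabs_mult, (Rabs_pos_eq (A m k)); auto.
Qed.

(* Exchanging the order of summation: the off-diagonal mass leaving row [m] is at most [c |nu m|]. *)
Lemma offdiag_total_partial_le n : ssum_partial S offdiag_total n <= c * L.
Proof.
  eapply ssum_le;
    [| exact (ssum_partial_sum S offdiag_mass offdiag_total n offdiag_total_spec)
     | exact (ssum_scal S c _ _ nu_abs_sum)].
  intros m Sm. cbv beta.
  assert (Hrow : ssum_partial S (fun k => if Nat.eqb k m then 0 else A m k) n <= 1 - A m m).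
  { apply (ssum_partial_le S); [| exact (ssum_delete S _ _ m Sm (A_row_sum m Sm))].
    intros k Sk. destruct (Nat.eqb k m); [lra | auto]. }
  replace (ssum_partial S (fun k => offdiag_mass k m) n)
    with (Rabs (nu m) * ssum_partial S (fun k => if Nat.eqb k m then 0 else A m k) n).
  - pose proof (A_diag_ge m Sm). pose proof (Rabs_pos (nu m)). nra.
  - unfold ssum_partial. rewrite scal_sum. apply sum_eq. intros k _.
    unfold offdiag_mass. rewrite Nat.eqb_sym. destruct (S k), (Nat.eqb m k); ring.
Qed.

Lemma near_identity_l1_lower_bound : (1 - 2 * c) * L <= L'.
Proof.
  enough ((1 - c) * L <= L' + c * L) by lra.
  apply (ssum_le_of_partial_le S (fun k => (1 - c) * Rabs (nu k)));
    [| exact (ssum_scal S _ _ _ nu_abs_sum)].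
  intros n.
  pose proof (offdiag_total_partial_le n).
  enough (ssum_partial S (fun k => (1 - c) * Rabs (nu k)) n <=
          ssum_partial S (fun k => Rabs (mu k)) n + ssum_partial S offdiag_total n).
  { pose proof (ssum_partial_le S _ _ n (fun k _ => Rabs_pos (mu k)) mu_abs_sum). lra. }
  unfold ssum_partial. rewrite <- plus_sum. apply sum_Rle. intros k _.
  destruct (S k) eqn:Sk; [| lra].
  pose proof (mu_near_diag k Sk). pose proof (A_diag_ge k Sk).
  pose proof (Rabs_pos (nu k)).
  pose proof (Rabs_triang_inv (nu k * A k k) (mu k)) as Htriangle.
  rewrite Rabs_minus_sym, Rabs_mult, (Rabs_pos_eq (A k k)) in Htriangle by auto.
  nra.
Qed.

End NearIdentityStochastic.

Section TransitionFunction.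
Variables (S : nat -> bool) (P : R -> nat -> nat -> R) (Q : nat -> nat -> R) (N : R).
Hypothesis HT : transition_function S P.
Hypothesis HQ : has_Q_matrix S P Q.
Hypothesis HC : conservative S Q.
Hypothesis HN : is_normQ S Q N.

Lemma P_nonneg t i j : 0 <= t -> S i = true -> S j = true -> 0 <= P t i j.
Proof. apply HT. Qed.

Lemma P_row_sum t i : 0 <= t -> S i = true -> ssum S (P t i) 1.
Proof. apply HT. Qed.

Lemma P_zero i j : S i = true -> S j = true -> P 0 i j = kron i j.
Proof. apply HT. Qed.

Lemma P_chapman_kolmogorov s t i j : 0 <= s -> 0 <= t -> S i = true -> S j = true ->
  ssum S (fun k => P s i k * P t k j) (P (s + t) i j).
Proof. apply HT. Qed.

Lemma Q_limit i j : S i = true -> S j = true -> forall eps, 0 < eps -> exists delta, 0 < delta /\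
  forall h, 0 < h < delta -> Rabs ((P h i j - kron i j) / h - Q i j) < eps.
Proof.
  intros Si Sj eps Heps. destruct (HQ i j Si Sj eps Heps) as [delta [Hdelta Hlim]].
  exists delta; split; [lra|]. intros h Hh. apply Hlim. split; [lra|].
  simpl. unfold Rdist. rewrite Rminus_0_r, Rabs_pos_eq; lra.
Qed.

Lemma Q_offdiag_nonneg i j : S i = true -> S j = true -> i <> j -> 0 <= Q i j.
Proof.
  intros Si Sj Hij. apply Rnot_lt_le. intros HQneg.
  destruct (Q_limit i j Si Sj (- Q i j / 2) ltac:(lra)) as [delta [Hdelta Hlim]].
  specialize (Hlim (delta / 2) ltac:(lra)).
  unfold kron in Hlim. rewrite (proj2 (Nat.eqb_neq i j) Hij), Rminus_0_r in Hlim.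
  assert (0 <= P (delta / 2) i j / (delta / 2)).
  { unfold Rdiv. apply Rmult_le_pos; [apply P_nonneg; auto; lra |].
    left; apply Rinv_0_lt_compat; lra. }
  apply Rabs_def2 in Hlim. lra.
Qed.

Lemma qdiag_nonneg k : S k = true -> 0 <= qdiag Q k.
Proof.
  intros Sk. eapply ssum_nonneg; [| exact (HC k Sk)].
  intros m Sm; cbv beta. destruct (Nat.eqb_spec m k); [lra|]. now apply Q_offdiag_nonneg.
Qed.

Lemma twice_qdiag_le_normQ k : S k = true -> 2 * qdiag Q k <= N.
Proof.
  intros Sk.
  assert (Hrow : ssum S (fun j => Rabs (Q k j)) (qdiag Q k + Rabs (Q k k))).
  { apply (ssum_undelete S (fun j => Rabs (Q k j)) (qdiag Q k) k Sk).
    eapply ssum_ext; [| exact (HC k Sk)].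
    intros m Sm; cbv beta. destruct (Nat.eqb_spec m k); [reflexivity|].
    symmetry; apply Rabs_pos_eq, Q_offdiag_nonneg; auto. }
  pose proof (proj1 HN _ (ex_intro _ k (conj Sk Hrow))).
  assert (qdiag Q k <= Rabs (Q k k)) by (unfold qdiag; rewrite <- Rabs_Ropp; apply Rle_abs).
  lra.
Qed.

Lemma P_diag_ge_exp k t : S k = true -> 0 <= t -> exp (- (N / 2) * t) <= P t k k.
Proof.
  intros Sk Ht. pose proof (qdiag_nonneg k Sk). pose proof (twice_qdiag_le_normQ k Sk).
  rewrite <- (Rmult_1_l (exp _)).
  apply (supermult_ge_exp (fun s => P s k k) (fun s => P s k k)); auto; [lra | lra | | |].
  - rewrite P_zero by auto. unfold kron. rewrite Nat.eqb_refl. lra.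
  - intros s h Hs Hh.
    apply (ssum_term_le S (fun m => P s k m * P h m k)); auto;
      [| apply P_chapman_kolmogorov; auto; lra].
    intros m Sm. apply Rmult_le_pos; apply P_nonneg; auto; lra.
  - intros eps Heps. destruct (Q_limit k k Sk Sk eps Heps) as [delta [Hdelta Hlim]].
    exists delta; split; auto. intros h Hh. specialize (Hlim h Hh).
    unfold kron in Hlim. rewrite Nat.eqb_refl in Hlim. apply Rabs_def2 in Hlim.
    assert (Hslope : (Q k k - eps) * h < P h k k - 1).
    { apply (Rmult_lt_reg_r (/ h)); [apply Rinv_0_lt_compat; lra|].
      replace ((Q k k - eps) * h * / h) with (Q k k - eps) by (field; lra). lra. }
    unfold qdiag in *. nra.
Qed.

Lemma one_sub_P_diag_le k h : S k = true -> 0 <= h -> 1 - P h k k <= N / 2 * h.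
Proof.
  intros Sk Hh. pose proof (P_diag_ge_exp k h Sk Hh).
  pose proof (exp_ineq1_le (- (N / 2) * h)). lra.
Qed.

Section RowPair.
Variables i j : nat.
Hypotheses (Si : S i = true) (Sj : S j = true).

Definition row_dist (s : R) : R :=
  series_value (fun k => if S k then Rabs (P s i k - P s j k) else 0).

Lemma row_dist_spec s : 0 <= s -> ssum S (fun k => Rabs (P s i k - P s j k)) (row_dist s).
Proof.
  intros Hs. apply series_value_spec.
  apply (ssum_exists_le S _ (fun k => P s i k + P s j k) (1 + 1));
    [| apply ssum_plus; apply P_row_sum; auto].
  intros k Sk. pose proof (P_nonneg s i k Hs Si Sk). pose proof (P_nonneg s j k Hs Sj Sk).
  split; [apply Rabs_pos | apply Rabs_le; lra].
Qed.

Lemma row_dist_step s h : 0 <= s -> 0 < h -> row_dist s * (1 - N * h) <= row_dist (s + h).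
Proof.
  intros Hs Hh.
  replace (row_dist s * (1 - N * h)) with ((1 - 2 * (N / 2 * h)) * row_dist s) by field.
  apply (near_identity_l1_lower_bound S (P h) (N / 2 * h)
           (fun m => P s i m - P s j m) (fun k => P (s + h) i k - P (s + h) j k)).
  - intros m k Sm Sk. apply P_nonneg; auto; lra.
  - intros m Sm. apply P_row_sum; auto; lra.
  - intros m Sm. pose proof (one_sub_P_diag_le m h Sm ltac:(lra)). lra.
  - now apply row_dist_spec.
  - intros k Sk. eapply ssum_ext;
      [| exact (ssum_minus S _ _ _ _ (P_chapman_kolmogorov s h i k Hs ltac:(lra) Si Sk)
                                     (P_chapman_kolmogorov s h j k Hs ltac:(lra) Sj Sk))].
    intros m _; cbv beta. ring.
  - apply row_dist_spec; lra.
Qed.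

Lemma row_dist_zero : i <> j -> 2 <= row_dist 0.
Proof.
  intros Hij. replace 2 with (1 + 1) by ring.
  eapply ssum_le;
    [| exact (ssum_plus S _ _ _ _ (ssum_single S i 1 Si) (ssum_single S j 1 Sj))
     | apply row_dist_spec; lra].
  intros k Sk. cbv beta. rewrite !P_zero by auto. unfold kron.
  rewrite (Nat.eqb_sym i k), (Nat.eqb_sym j k).
  destruct (Nat.eqb_spec k i), (Nat.eqb_spec k j); subst;
    try congruence; rewrite ?Rminus_0_r, ?Rminus_0_l, ?Rabs_Ropp, ?Rabs_R1, ?Rminus_diag, ?Rabs_R0;
    lra.
Qed.

Lemma row_dist_ge_exp t : i <> j -> 0 <= t -> 2 * exp (- N * t) <= row_dist t.
Proof.
  intros Hij Ht. pose proof (qdiag_nonneg i Si). pose proof (twice_qdiag_le_normQ i Si).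
  apply (supermult_ge_exp row_dist (fun h => 1 - N * h)); auto; [lra | lra | | |].
  - now apply row_dist_zero.
  - intros s h Hs Hh. now apply row_dist_step.
  - intros eps Heps. exists 1. split; [lra|]. intros h Hh. nra.
Qed.

End RowPair.
End TransitionFunction.

Theorem mainTheorem10 (S : nat -> bool) (P : R -> nat -> nat -> R)
  (Q : nat -> nat -> R) (N : R) :
  transition_function S P ->
  has_Q_matrix S P Q ->
  conservative S Q ->
  (exists B, forall i, S i = true -> qdiag Q i <= B) ->
  is_normQ S Q N ->
  (forall t, 0 <= t ->
     0 < exp (- t * N) /\
     forall i j, S i = true -> S j = true -> i <> j ->
       exists d, tv_rows S P t i j d /\ exp (- t * N) <= d) /\
  initial_state_identifiable S P.
Proof.
  intros HT HQ HC _ HN.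
  assert (Htv : forall t i j, 0 <= t -> S i = true -> S j = true -> i <> j ->
            tv_rows S P t i j (row_dist S P i j t / 2) /\ exp (- t * N) <= row_dist S P i j t / 2).
  { intros t i j Ht Si Sj Hij. split.
    - unfold tv_rows. replace (2 * (row_dist S P i j t / 2)) with (row_dist S P i j t) by field.
      now apply row_dist_spec.
    - pose proof (row_dist_ge_exp S P Q N HT HQ HC HN i j Si Sj t Hij Ht).
      replace (- t * N) with (- N * t) by ring. lra. }
  split.
  - intros t Ht. split; [apply exp_pos|]. intros i j Si Sj Hij.
    eexists. now apply Htv.
  - intros t i j Ht Si Sj Hij. apply NNPP. intros Hsame.
    destruct (Htv t i j Ht Si Sj Hij) as [_ Hexp].
    assert (Hzero : row_dist S P i j t <= 0).
    { eapply ssum_le; [| exact (row_dist_spec S P HT i j Si Sj t Ht) | apply ssum_const0].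
      intros k Sk; cbv beta. enough (P t i k = P t j k) as -> by (rewrite Rminus_diag, Rabs_R0; lra).
      apply NNPP. intros Hk. apply Hsame. now exists k. }
    pose proof (exp_pos (- t * N)). lra.
Qed.
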